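(* Let $m\in\mathbb{N}$ and $\beta\in(1,\mathcal{G}(m))$. There exists a constant $c(\beta)>0$, depending only on $\beta$ (and $m$), such that for every $x\in(0,\frac{m}{\beta-1})$, $\dim_H(\Sigma_{\beta,m}(x))\ge c(\beta)$.
   Context: $\mathcal{G}(m)=k+1$ if $m=2k$ and $\mathcal{G}(m)=\frac{k+1+\sqrt{k^2+6k+5}}{2}$ if $m=2k+1$. For $x\in[0,\frac{m}{\beta-1}]$, $\Sigma_{\beta,m}(x)=\{(\epsilon_i)_{i=1}^\infty\in\{0,\ldots,m\}^{\mathbb{N}}:\sum_{i\ge1}\epsilon_i\beta^{-i}=x\}$. The space $\{0,\ldots,m\}^{\mathbb{N}}$ carries the metric $d(x,y)=(m+1)^{-n(x,y)}$ for $x\ne y$, where $n(x,y)=\inf\{i:x_i\ne y_i\}$, and $d(x,x)=0$; Hausdorff dimension is taken with respect to $d$. *)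

From Stdlib Require Import Reals Lra ClassicalEpsilon.
From Coquelicot Require Import Coquelicot.
Open Scope R_scope.

Definition Gm (m : nat) : R :=
  let k := INR (Nat.div2 m) in
  if Nat.even m then k + 1
  else (k + 1 + sqrt (k ^ 2 + 6 * k + 5)) / 2.

(* Sequences (eps_1, eps_2, ...) are represented as e : nat -> nat with
   e i = eps_{i+1}. *)

Definition Sigma (beta : R) (m : nat) (x : R) (e : nat -> nat) : Prop :=
  (forall i, (e i <= m)%nat) /\
  is_series (fun i => INR (e i) / beta ^ (S i)) x.

(* n(x,y) = inf {i >= 1 : x_i <> y_i}; in 0-based indexing this is
   (least j with x j <> y j) + 1. *)
Definition first_diff (x y : nat -> nat) (j : nat) : Prop :=
  x j <> y j /\ forall i, (i < j)%nat -> x i = y i.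

Definition seqdist (m : nat) (x y : nat -> nat) : R :=
  match excluded_middle_informative (exists j, x j <> y j) with
  | left _ => / (INR (m + 1)) ^ (S (epsilon (inhabits 0%nat) (first_diff x y)))
  | right _ => 0
  end.

Definition diam (m : nat) (E : (nat -> nat) -> Prop) : Rbar :=
  Rbar_lub (fun r => r = Finite 0 \/
                     exists x y, E x /\ E y /\ r = Finite (seqdist m x y)).

(* t^s with the convention 0^s = 0 (used only for s > 0). *)
Definition pw (t s : R) : R :=
  match Req_EM_T t 0 with left _ => 0 | right _ => Rpower t s end.

Definition esum (u : nat -> R) : Rbar :=
  Sup_seq (fun n => Finite (sum_n u n)).

Definition hcontent (m : nat) (delta s : R) (A : (nat -> nat) -> Prop) : Rbar :=
  Rbar_glb (fun r => exists E : nat -> ((nat -> nat) -> Prop),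
    (forall x, A x -> exists i, E i x) /\
    (forall i, Rbar_le (diam m (E i)) (Finite delta)) /\
    r = esum (fun i => pw (real (diam m (E i))) s)).

Definition hmeasure (m : nat) (s : R) (A : (nat -> nat) -> Prop) : Rbar :=
  Rbar_lub (fun r => exists delta, 0 < delta /\ r = hcontent m delta s A).

(* Hausdorff dimension: inf {s > 0 : H^s(A) = 0} (inf of empty set = +oo). *)
Definition hdim (m : nat) (A : (nat -> nat) -> Prop) : Rbar :=
  Rbar_glb (fun r => exists s, 0 < s /\ r = Finite s /\ hmeasure m s A = Finite 0).

From Stdlib Require Import Reals Lra Lia Arith List Classical ClassicalEpsilon.
From Coquelicot Require Import Coquelicot.
Open Scope R_scope.

(* The extreme digits 0 and m push a point x of (0, m/(beta-1)) into the inner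
   interval K = [eps, m/(beta-1) - eps].  For beta < G(m), from every point of
   K one reaches, within a bounded number of steps and without leaving K, a
   point where two different digits both keep the orbit in K; hence every
   point of K has two distinct admissible words of a common length N that
   stay in K.  Choosing one of the two words at each stage embeds Cantor space
   into Sigma_{beta,m}(x) so that the first k binary choices are read off the
   first p + (k+1) N digits.  Kraft's inequality and the compactness of Cantor
   space then give a mass-distribution lower bound: the Hausdorff measure in
   dimension log 2 / (N log (m+1)) is positive. *)

Lemma least_witness (P : nat -> Prop) n : P n ->
  exists j, (j <= n)%nat /\ P j /\ forall i, (i < j)%nat -> ~ P i.
Proof.
  induction n as [n IH] using (well_founded_induction lt_wf); intros Pn.
  destruct (classic (exists i, (i < n)%nat /\ P i)) as [[i [Hi Pi]]|Hmin].
  - destruct (IH i Hi Pi) as [j [Hj [Pj Hleast]]].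
    exists j; repeat split; auto; lia.
  - exists n; repeat split; auto. intros i Hi Pi; apply Hmin; eauto.
Qed.

Lemma sum_f_R0_ge_term (u : nat -> R) n i :
  (forall j, 0 <= u j) -> (i <= n)%nat -> u i <= sum_f_R0 u n.
Proof.
  intros Hu; induction n; intros Hi; simpl.
  - replace i with O by lia; lra.
  - destruct (Nat.eq_dec i (S n)) as [->|Hne].
    + pose proof (cond_pos_sum u n Hu); lra.
    + specialize (IHn ltac:(lia)); specialize (Hu (S n)); lra.
Qed.

Lemma sum_inv_pow2_lt_half n : sum_f_R0 (fun i => / 2 ^ (i + 2)) n < / 2.
Proof.
  rewrite (sum_eq _ (fun i => (/ 2) ^ i * / 4))
    by (intros i _; rewrite pow_add, pow_inv; simpl; field; apply pow_nonzero; lra).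
  rewrite <- scal_sum, tech3 by lra.
  pose proof (pow_lt (/ 2) (S n) ltac:(lra)).
  replace ((1 - (/ 2) ^ S n) / (1 - / 2)) with (2 * (1 - (/ 2) ^ S n)) by field.
  lra.
Qed.

Definition cylinder (k : nat) (c s : nat -> bool) : Prop :=
  forall j, (j < k)%nat -> s j = c j.

Definition set_bit (q : nat -> bool) (L : nat) (bt : bool) : nat -> bool :=
  fun j => if Nat.eqb j L then bt else q j.

Lemma cylinder_set_bit L q s :
  cylinder L q s -> cylinder (S L) (set_bit q L (s L)) s.
Proof.
  intros Hs j Hj; unfold set_bit.
  destruct (Nat.eqb_spec j L) as [->|Hne]; auto; apply Hs; lia.
Qed.

Lemma cylinder_set_bit_inv L q bt s :
  cylinder (S L) (set_bit q L bt) s -> cylinder L q s.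
Proof.
  intros Hs j Hj; rewrite (Hs j ltac:(lia)); unfold set_bit.
  destruct (Nat.eqb_spec j L); [lia | auto].
Qed.

(** * Kraft's inequality for cylinder covers of Cantor space *)

(* The weight of the cylinder [c]_k relative to [q]_L: an upper bound for the
   conditional measure of [c]_k in [q]_L, equal to 1 when [q]_L is inside
   [c]_k (note the truncated subtraction [k - L]). *)
Definition cond_weight (k : nat) (c : nat -> bool) (L : nat) (q : nat -> bool) : R :=
  if excluded_middle_informative (forall j, (j < k)%nat -> (j < L)%nat -> c j = q j)
  then / 2 ^ (k - L) else 0.

Lemma cond_weight_bounds k c L q : 0 <= cond_weight k c L q <= / 2 ^ (k - L).
Proof.
  assert (0 < / 2 ^ (k - L)) by (apply Rinv_0_lt_compat, pow_lt; lra).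
  unfold cond_weight; destruct excluded_middle_informative; lra.
Qed.

Lemma cond_weight_split k c L q :
  (cond_weight k c (S L) (set_bit q L false)
   + cond_weight k c (S L) (set_bit q L true)) / 2 <= cond_weight k c L q.
Proof.
  pose proof (cond_weight_bounds k c (S L) (set_bit q L false)) as Hf.
  pose proof (cond_weight_bounds k c (S L) (set_bit q L true)) as Ht.
  unfold cond_weight at 3; destruct excluded_middle_informative as [Hc|Hc].
  - destruct (le_lt_dec k L) as [HkL|HkL].
    + replace (k - S L)%nat with O in * by lia.
      replace (k - L)%nat with O by lia. simpl in *; lra.
    + assert (Hother : cond_weight k c (S L) (set_bit q L (negb (c L))) = 0).
      { unfold cond_weight; destruct excluded_middle_informative as [H|]; auto.
        specialize (H L HkL ltac:(lia)); unfold set_bit in H.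
        rewrite Nat.eqb_refl in H; destruct (c L); discriminate. }
      replace (k - L)%nat with (S (k - S L)) by lia.
      simpl; rewrite Rinv_mult.
      destruct (c L); simpl in Hother; rewrite Hother in *; lra.
  - assert (Hzero : forall bt, cond_weight k c (S L) (set_bit q L bt) = 0).
    { intros bt; unfold cond_weight; destruct excluded_middle_informative as [H|]; auto.
      exfalso; apply Hc; intros j Hj HjL; rewrite (H j Hj ltac:(lia)).
      unfold set_bit; destruct (Nat.eqb_spec j L); [lia | auto]. }
    rewrite !Hzero; lra.
Qed.

Lemma cond_weight_cover n (k : nat -> nat) (c : nat -> nat -> bool) : forall t L q,
  (forall i, (i <= n)%nat -> (k i <= L + t)%nat) ->
  (forall s, cylinder L q s -> exists i, (i <= n)%nat /\ cylinder (k i) (c i) s) ->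
  1 <= sum_f_R0 (fun i => cond_weight (k i) (c i) L q) n.
Proof.
  induction t as [|t IH]; intros L q Hdepth Hcover.
  - destruct (Hcover q) as [i [Hi Hqi]]; [intros j _; reflexivity|].
    replace 1 with (cond_weight (k i) (c i) L q).
    + apply (sum_f_R0_ge_term (fun i => cond_weight (k i) (c i) L q)); auto.
      intros j; apply cond_weight_bounds.
    + unfold cond_weight; destruct excluded_middle_informative as [_|Hn].
      * replace (k i - L)%nat with O by (specialize (Hdepth i Hi); lia); simpl; lra.
      * exfalso; apply Hn; intros j Hj _; symmetry; apply Hqi; auto.
  - assert (Hhalf : forall bt,
      1 <= sum_f_R0 (fun i => cond_weight (k i) (c i) (S L) (set_bit q L bt)) n).
    { intros bt; apply IH.
      - intros i Hi; specialize (Hdepth i Hi); lia.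
      - intros s Hs; apply Hcover; eapply cylinder_set_bit_inv; eauto. }
    pose proof (Hhalf false); pose proof (Hhalf true).
    assert (Hle : sum_f_R0 (fun i => (cond_weight (k i) (c i) (S L) (set_bit q L false)
                   + cond_weight (k i) (c i) (S L) (set_bit q L true)) * / 2) n
                  <= sum_f_R0 (fun i => cond_weight (k i) (c i) L q) n).
    { apply sum_Rle; intros i _; apply cond_weight_split. }
    rewrite <- scal_sum, plus_sum in Hle; lra.
Qed.

Lemma kraft_inequality n (k : nat -> nat) (c : nat -> nat -> bool) :
  (forall s, exists i, (i <= n)%nat /\ cylinder (k i) (c i) s) ->
  1 <= sum_f_R0 (fun i => / 2 ^ k i) n.
Proof.
  intros Hcover.
  assert (Hdepth : exists t, forall i, (i <= n)%nat -> (k i <= t)%nat).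
  { clear Hcover; induction n as [|n [t Ht]]; [exists (k O); intros i Hi; replace i with O by lia; lia|].
    exists (Nat.max t (k (S n))); intros i Hi.
    destruct (Nat.eq_dec i (S n)) as [->|]; [lia|]; specialize (Ht i ltac:(lia)); lia. }
  destruct Hdepth as [t Ht].
  replace (sum_f_R0 (fun i => / 2 ^ k i) n)
    with (sum_f_R0 (fun i => cond_weight (k i) (c i) O (fun _ => false)) n).
  - apply (cond_weight_cover n k c t); auto.
  - apply sum_eq; intros i _; unfold cond_weight.
    destruct excluded_middle_informative as [_|Hn]; [now rewrite Nat.sub_0_r|].
    exfalso; apply Hn; intros; lia.
Qed.

(** * Compactness of Cantor space *)

Section Compactness.
Variables (k : nat -> nat) (c : nat -> nat -> bool).

Definition uncovered (L : nat) (q : nat -> bool) : Prop :=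
  forall n, exists s, cylinder L q s /\ forall i, (i <= n)%nat -> ~ cylinder (k i) (c i) s.

Lemma uncovered_child L q : uncovered L q ->
  uncovered (S L) (set_bit q L false) \/ uncovered (S L) (set_bit q L true).
Proof.
  intros Hq; apply NNPP; intros Hboth; apply not_or_and in Hboth as [Hf Ht].
  apply not_all_ex_not in Hf as [nf Hf]; apply not_all_ex_not in Ht as [nt Ht].
  destruct (Hq (nf + nt)%nat) as [s [Hs Hnot]].
  assert (Hchild : forall n, (n <= nf + nt)%nat ->
    exists s', cylinder (S L) (set_bit q L (s L)) s' /\
               forall i, (i <= n)%nat -> ~ cylinder (k i) (c i) s').
  { intros n Hn; exists s; split; [now apply cylinder_set_bit|].
    intros i Hi; apply Hnot; lia. }
  destruct (s L); [apply Ht | apply Hf]; apply Hchild; lia.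
Qed.

Fixpoint uncovered_branch (L : nat) : nat -> bool :=
  match L with
  | O => fun _ => false
  | S L => let q := uncovered_branch L in
      if excluded_middle_informative (uncovered (S L) (set_bit q L false))
      then set_bit q L false else set_bit q L true
  end.

Lemma uncovered_branch_spec L :
  uncovered O (fun _ => false) -> uncovered L (uncovered_branch L).
Proof.
  intros H0; induction L as [|L IH]; simpl; auto.
  destruct excluded_middle_informative; auto.
  destruct (uncovered_child _ _ IH); tauto.
Qed.

Lemma uncovered_branch_stable L j :
  (j < L)%nat -> uncovered_branch L j = uncovered_branch (S j) j.
Proof.
  induction L as [|L IH]; intros Hj; [lia|].
  destruct (Nat.eq_dec j L) as [->|Hne]; auto.
  rewrite <- IH by lia; simpl.
  destruct excluded_middle_informative; unfold set_bit;
    destruct (Nat.eqb_spec j L); try lia; auto.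
Qed.

Lemma cylinder_cover_finite :
  (forall s, exists i, cylinder (k i) (c i) s) ->
  exists n, forall s, exists i, (i <= n)%nat /\ cylinder (k i) (c i) s.
Proof.
  intros Hcover; apply NNPP; intros Hinf.
  assert (H0 : uncovered O (fun _ => false)).
  { intros n; apply not_ex_all_not with (n := n) in Hinf.
    apply not_all_ex_not in Hinf as [s Hs]; exists s; split; [intros j Hj; lia|].
    intros i Hi Hsi; apply Hs; eauto. }
  destruct (Hcover (fun j => uncovered_branch (S j) j)) as [i Hi].
  destruct (uncovered_branch_spec (k i) H0 i) as [s [Hs Hnot]].
  apply (Hnot i (le_n i)); intros j Hj.
  rewrite Hs, uncovered_branch_stable by auto; apply Hi; auto.
Qed.

End Compactness.

(** * Hausdorff dimension by mass distribution *)

Lemma Rbar_lub_ub (E : Rbar -> Prop) x : E x -> Rbar_le x (Rbar_lub E).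
Proof. intros Hx; unfold Rbar_lub; destruct (Rbar_ex_lub E) as [l Hl]; apply Hl, Hx. Qed.

Lemma Rbar_glb_ge (E : Rbar -> Prop) b :
  (forall x, E x -> Rbar_le b x) -> Rbar_le b (Rbar_glb E).
Proof. intros Hb; unfold Rbar_glb; destruct (Rbar_ex_glb E) as [l Hl]; exact (proj2 Hl b Hb). Qed.

Lemma pw_nonneg t s : 0 <= pw t s.
Proof. unfold pw; destruct Req_EM_T; [lra | left; apply exp_pos]. Qed.

Lemma seqdist_ge m x y j : x j <> y j -> / INR (m + 1) ^ S j <= seqdist m x y.
Proof.
  intros Hj; unfold seqdist; destruct excluded_middle_informative as [_|Hsame];
    [|exfalso; eauto].
  assert (Hex : exists f, first_diff x y f).
  { destruct (least_witness (fun i => x i <> y i) j Hj) as [f [_ [Hf Hleast]]].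
    exists f; split; auto; intros i Hi; apply NNPP; eauto. }
  destruct (epsilon_spec (inhabits 0%nat) (first_diff x y) Hex) as [Hf Hbefore].
  assert (epsilon (inhabits 0%nat) (first_diff x y) <= j)%nat.
  { apply Nat.nlt_ge; intros Hlt; apply Hj, Hbefore, Hlt. }
  assert (1 <= INR (m + 1)) by (rewrite plus_INR; pose proof (pos_INR m); simpl; lra).
  apply Rinv_le_contravar; [apply pow_lt; lra|]; apply Rle_pow; auto; lia.
Qed.

Lemma diam_le_1 m E : Rbar_le (diam m E) 1 ->
  exists D, diam m E = Finite D /\ 0 <= D <= 1 /\
    forall x y, E x -> E y -> seqdist m x y <= D.
Proof.
  unfold diam; set (V := fun r => _ \/ _); intros Hle.
  assert (H0 : Rbar_le 0 (Rbar_lub V)) by (apply Rbar_lub_ub; now left).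
  assert (Hub : forall x y, E x -> E y -> Rbar_le (seqdist m x y) (Rbar_lub V)).
  { intros x y Ex Ey; apply Rbar_lub_ub; right; eauto 6. }
  destruct (Rbar_lub V) as [D| |]; simpl in *; try contradiction; eauto.
Qed.

Section MassDistribution.
Variables (m N p : nat) (A : (nat -> nat) -> Prop) (Phi : (nat -> bool) -> nat -> nat).
Hypothesis m_pos : (1 <= m)%nat.
Hypothesis N_pos : (1 <= N)%nat.
Hypothesis Phi_in : forall s, A (Phi s).
Hypothesis Phi_separates : forall s t k,
  (forall i, (i < k)%nat -> s i = t i) -> s k <> t k ->
  exists j, (j < p + S k * N)%nat /\ Phi s j <> Phi t j.

Definition dim_bound : R := ln 2 / (INR N * ln (INR (m + 1))).

Definition mass_constant : R := 2 * exp (INR p * ln 2 / INR N).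

Lemma ln_m1_pos : 0 < ln (INR (m + 1)).
Proof.
  rewrite <- ln_1; apply ln_increasing; [lra|].
  apply le_INR in m_pos; rewrite plus_INR; simpl in *; lra.
Qed.

Lemma dim_bound_pos : 0 < dim_bound.
Proof.
  pose proof ln_m1_pos; pose proof (lt_0_INR N ltac:(lia)).
  apply Rdiv_lt_0_compat; [rewrite <- ln_1; apply ln_increasing|apply Rmult_lt_0_compat]; lra.
Qed.

Lemma mass_constant_pos : 0 < mass_constant.
Proof. pose proof (exp_pos (INR p * ln 2 / INR N)); unfold mass_constant; lra. Qed.

(* [dim_bound] is chosen so that [(m+1)^(-N * dim_bound) = 1/2]. *)
Lemma mass_constant_scale k :
  mass_constant * Rpower (/ INR (m + 1) ^ (p + S k * N)) dim_bound = / 2 ^ k.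
Proof.
  pose proof ln_m1_pos; pose proof (lt_0_INR N ltac:(lia)).
  assert (0 < INR (m + 1)) by (apply lt_0_INR; lia).
  unfold Rpower, mass_constant, dim_bound.
  rewrite ln_Rinv, ln_pow by (try apply pow_lt; lra).
  rewrite <- (Rpower_pow k 2) by lra; unfold Rpower.
  rewrite <- exp_Ropp, Rmult_assoc, <- exp_plus.
  replace 2 with (exp (ln 2)) at 1 by (apply exp_ln; lra).
  rewrite <- exp_plus; f_equal.
  rewrite (plus_INR p), mult_INR, S_INR; field; lra.
Qed.

Lemma cylinder_weight_le k D s :
  / INR (m + 1) ^ (p + S k * N) <= D <= 1 -> 0 < s <= dim_bound ->
  / 2 ^ k <= mass_constant * pw D s.
Proof.
  intros HD Hs; rewrite <- mass_constant_scale.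
  pose proof mass_constant_pos; pose proof dim_bound_pos.
  assert (Hpos : 0 < / INR (m + 1) ^ (p + S k * N))
    by (apply Rinv_0_lt_compat, pow_lt, lt_0_INR; lia).
  apply Rmult_le_compat_l; [lra|].
  apply Rle_trans with (Rpower D dim_bound); [apply Rle_Rpower_l; lra|].
  unfold pw; destruct Req_EM_T; [lra|]; unfold Rpower.
  assert (ln D <= 0) by (rewrite <- ln_1; apply ln_le; lra).
  assert (Hexp : dim_bound * ln D <= s * ln D) by nra.
  destruct (Rle_lt_or_eq_dec _ _ Hexp) as [Hlt| ->]; [left; apply exp_increasing|]; lra.
Qed.

Lemma preimage_in_cylinder (E : (nat -> nat) -> Prop) (D : R) k :
  (forall x y, E x -> E y -> seqdist m x y <= D) ->
  (forall j, (j < k)%nat -> D < / INR (m + 1) ^ (p + S j * N)) ->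
  exists c, forall s, E (Phi s) -> cylinder k c s.
Proof.
  intros HD Hsmall.
  destruct (classic (exists s0, E (Phi s0))) as [[s0 Hs0]|Hempty];
    [exists s0 | exists (fun _ => false); intros s Hs; exfalso; eauto].
  intros s Hs j Hj; apply NNPP; intros Hne.
  destruct (least_witness (fun i => s i <> s0 i) j Hne) as [j' [Hj' [Hne' Hleast]]].
  destruct (Phi_separates s s0 j') as [jj [Hjj Hdiff]]; auto.
  { intros i Hi; apply NNPP; eauto. }
  assert (1 <= INR (m + 1)) by (rewrite plus_INR; pose proof (pos_INR m); simpl; lra).
  assert (/ INR (m + 1) ^ (p + S j' * N) <= / INR (m + 1) ^ S jj).
  { apply Rinv_le_contravar; [apply pow_lt; lra|]; apply Rle_pow; auto; lia. }
  pose proof (seqdist_ge m _ _ _ Hdiff); pose proof (HD _ _ Hs Hs0).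
  specialize (Hsmall j' ltac:(lia)); lra.
Qed.

(* A set of small diameter sees only a cylinder of [Phi]-preimages, whose
   mass [2^-k] is controlled by the diameter; the [2^-(i+2)] slack lets the
   i-th covering set choose the depth [k <= i + 2]. *)
Lemma small_set_in_cylinder (E : (nat -> nat) -> Prop) (s : R) i :
  0 < s <= dim_bound -> Rbar_le (diam m E) 1 ->
  exists k c, (forall t, E (Phi t) -> cylinder k c t) /\
    / 2 ^ k <= / 2 ^ (i + 2) + mass_constant * pw (real (diam m E)) s.
Proof.
  intros Hs Hdiam; destruct (diam_le_1 m E Hdiam) as [D [-> [HD HsepD]]]; simpl.
  set (reached := fun j => / INR (m + 1) ^ (p + S j * N) <= D).
  destruct (least_witness (fun j => reached j \/ j = (i + 2)%nat) (i + 2) (or_intror eq_refl))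
    as [k [Hk [Hreach Hleast]]].
  destruct (preimage_in_cylinder E D k HsepD) as [c Hc].
  { intros j Hj; apply Rnot_le_lt; intros Hr; apply (Hleast j Hj); now left. }
  exists k, c; split; auto.
  pose proof (Rmult_le_pos _ _ (Rlt_le _ _ mass_constant_pos) (pw_nonneg D s)).
  assert (0 < / 2 ^ (i + 2)) by (apply Rinv_0_lt_compat, pow_lt; lra).
  destruct Hreach as [Hr| ->]; [|lra].
  pose proof (cylinder_weight_le k D s (conj Hr (proj2 HD)) Hs); lra.
Qed.

(* Replacing each covering set by a cylinder, Kraft's inequality gives
   [1 <= sum 2^-k_i < 1/2 + mass_constant * sum diam(E_i)^s]. *)
Lemma hcontent_ge (s : R) : 0 < s <= dim_bound ->
  Rbar_le (/ (4 * mass_constant)) (hcontent m 1 s A).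
Proof.
  intros Hs; apply Rbar_glb_ge; intros r [E [Hcover [Hdiam ->]]].
  set (u := fun i => pw (real (diam m (E i))) s).
  pose proof mass_constant_pos as HC.
  destruct (Rbar_le_lt_dec (/ (4 * mass_constant)) (esum u)) as [|Hsmall]; auto.
  exfalso.
  assert (Hpartial : forall n, sum_f_R0 u n < / (4 * mass_constant)).
  { intros n; rewrite <- sum_n_Reals.
    pose proof (Sup_seq_minor_le (fun n => Finite (sum_n u n)) (sum_n u n) n (Rle_refl _)).
    unfold esum in Hsmall; destruct (Sup_seq _); simpl in *; try contradiction; lra. }
  destruct (choice (fun i kc => (forall t, E i (Phi t) -> cylinder (fst kc) (snd kc) t) /\
                     / 2 ^ fst kc <= / 2 ^ (i + 2) + mass_constant * u i))
    as [F HF].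
  { intros i; destruct (small_set_in_cylinder (E i) s i Hs (Hdiam i)) as [k [c Hkc]].
    now exists (k, c). }
  destruct (cylinder_cover_finite (fun i => fst (F i)) (fun i => snd (F i))) as [n Hn].
  { intros t; destruct (Hcover (Phi t) (Phi_in t)) as [i Hi].
    exists i; apply (proj1 (HF i)), Hi. }
  pose proof (kraft_inequality n _ _ Hn) as Hkraft.
  assert (Hle : sum_f_R0 (fun i => / 2 ^ fst (F i)) n
                <= sum_f_R0 (fun i => / 2 ^ (i + 2) + u i * mass_constant) n).
  { apply sum_Rle; intros i _; rewrite Rmult_comm; apply (proj2 (HF i)). }
  pose proof (sum_inv_pow2_lt_half n).
  rewrite plus_sum, <- scal_sum in Hle.
  pose proof (Rmult_lt_compat_l _ _ _ HC (Hpartial n)).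
  replace (mass_constant * / (4 * mass_constant)) with (/ 4) in * by (field; lra).
  lra.
Qed.

Lemma hmeasure_nonzero (s : R) : 0 < s <= dim_bound -> hmeasure m s A <> 0.
Proof.
  intros Hs Hzero.
  pose proof (hcontent_ge s Hs) as Hge.
  pose proof (Rbar_lub_ub (fun r => exists delta, 0 < delta /\ r = hcontent m delta s A)
                (hcontent m 1 s A) (ex_intro _ 1 (conj Rlt_0_1 eq_refl))) as Hle.
  unfold hmeasure in Hzero; rewrite Hzero in Hle.
  assert (0 < / (4 * mass_constant)) by (pose proof mass_constant_pos; apply Rinv_0_lt_compat; lra).
  destruct (hcontent m 1 s A); simpl in *; lra.
Qed.

Lemma hdim_ge_dim_bound : Rbar_le dim_bound (hdim m A).
Proof.
  apply Rbar_glb_ge; intros r [s [Hs [-> Hzero]]]; simpl.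
  apply Rnot_lt_le; intros Hlt; apply (hmeasure_nonzero s); auto; lra.
Qed.

End MassDistribution.

(** * Orbits of the digit maps and expansions *)

Section Expansions.
Variables (b : R) (m : nat).

(* [orbit e y n] is the remainder [b^n (y - sum_(i<n) e_i b^-(i+1))]. *)
Fixpoint orbit (e : nat -> nat) (y : R) (n : nat) : R :=
  match n with O => y | S n => b * orbit e y n - INR (e n) end.

Definition Tword (y : R) (w : list nat) : R := fold_left (fun z d => b * z - INR d) w y.

(* [P] is required of the points visited after [y], not of [y] itself. *)
Fixpoint path_in (P : R -> Prop) (y : R) (w : list nat) : Prop :=
  match w with
  | nil => True
  | d :: w => (d <= m)%nat /\ P (b * y - INR d) /\ path_in P (b * y - INR d) w
  end.

Lemma Tword_app y u v : Tword y (u ++ v) = Tword (Tword y u) v.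
Proof. apply fold_left_app. Qed.

Lemma path_in_app P y u v :
  path_in P y u -> path_in P (Tword y u) v -> path_in P y (u ++ v).
Proof. revert y; induction u as [|d u IH]; simpl; auto; intros y [? [? ?]] ?; auto. Qed.

Lemma path_in_firstn P y w r :
  P y -> path_in P y w -> (r <= length w)%nat -> P (Tword y (firstn r w)).
Proof.
  revert y r; induction w as [|d w IH]; intros y r Py Hw Hr.
  - simpl in Hr; replace r with O by lia; auto.
  - destruct r as [|r]; simpl; auto.
    destruct Hw as [_ [Pd Hw]]; apply IH; auto; simpl in Hr; lia.
Qed.

Lemma path_in_last P y w : P y -> path_in P y w -> P (Tword y w).
Proof. intros Py Hw; rewrite <- (firstn_all w); apply path_in_firstn; auto. Qed.

Lemma path_in_digit P y w i : path_in P y w -> (nth i w O <= m)%nat.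
Proof.
  revert y i; induction w as [|d w IH]; simpl; intros y i Hw; [destruct i; lia|].
  destruct Hw as [Hd [_ Hw]]; destruct i; eauto.
Qed.

Lemma orbit_word e y w n r :
  (forall j, (j < length w)%nat -> e (n + j)%nat = nth j w O) -> (r <= length w)%nat ->
  orbit e y (n + r) = Tword (orbit e y n) (firstn r w).
Proof.
  revert n r; induction w as [|d w IH]; intros n r Hew Hr.
  - simpl in Hr; replace r with O by lia; rewrite Nat.add_0_r; reflexivity.
  - destruct r as [|r]; [rewrite Nat.add_0_r; reflexivity|].
    rewrite <- Nat.add_succ_comm, (IH (S n) r); simpl in *; try lia.
    + specialize (Hew O ltac:(lia)); rewrite Nat.add_0_r in Hew; rewrite Hew; reflexivity.
    + intros j Hj; rewrite <- Nat.add_succ_r; apply (Hew (S j) ltac:(lia)).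
Qed.

Lemma orbit_partial_sum e x n : b <> 0 ->
  x - sum_n (fun i => INR (e i) / b ^ S i) n = orbit e x (S n) / b ^ S n.
Proof.
  intros Hb; induction n as [|n IH].
  - rewrite sum_O; simpl; field; auto.
  - rewrite sum_Sn; change (plus ?a ?c) with (a + c).
    replace (x - (sum_n (fun i => INR (e i) / b ^ S i) n + INR (e (S n)) / b ^ S (S n)))
      with (x - sum_n (fun i => INR (e i) / b ^ S i) n - INR (e (S n)) / b ^ S (S n))
      by ring.
    rewrite IH; simpl; field; split; auto; apply pow_nonzero; auto.
Qed.

Lemma is_series_of_bounded_orbit e x C : 1 < b ->
  (forall n, 0 <= orbit e x n <= C) -> is_series (fun i => INR (e i) / b ^ S i) x.
Proof.
  intros Hb Horbit.
  assert (Hsandwich : forall n,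
    x - C / b * (/ b) ^ n <= sum_n (fun i => INR (e i) / b ^ S i) n <= x).
  { intros n; pose proof (orbit_partial_sum e x n ltac:(lra)) as Hsum.
    specialize (Horbit (S n)).
    assert (0 < b ^ S n) by (apply pow_lt; lra).
    replace (C / b * (/ b) ^ n) with (C / b ^ S n)
      by (rewrite pow_inv; simpl; field; split; [apply pow_nonzero|]; lra).
    assert (0 <= orbit e x (S n) / b ^ S n) by (apply Rdiv_le_0_compat; lra).
    assert (orbit e x (S n) / b ^ S n <= C / b ^ S n)
      by (apply Rmult_le_compat_r; [left; apply Rinv_0_lt_compat|]; lra).
    lra. }
  assert (Hlim : is_lim_seq (fun n => C / b * (/ b) ^ n) 0).
  { replace (Finite 0) with (Rbar_mult (C / b) 0) by (simpl; f_equal; ring).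
    apply is_lim_seq_scal_l, is_lim_seq_geom.
    rewrite Rabs_pos_eq by (left; apply Rinv_0_lt_compat; lra).
    apply (Rmult_lt_reg_l b); [lra|]; rewrite Rinv_r; lra. }
  pose proof (is_lim_seq_minus' _ _ x 0 (is_lim_seq_const x) Hlim) as Hlow.
  rewrite Rminus_0_r in Hlow.
  exact (is_lim_seq_le_le _ _ _ x Hsandwich Hlow (is_lim_seq_const x)).
Qed.

(* The default of [nth] beyond the end of [w] continues with [e]. *)
Definition prepend (w : list nat) (e : nat -> nat) (i : nat) : nat :=
  nth i w (e (i - length w)%nat).

Lemma prepend_tail w e n : prepend w e (length w + n) = e n.
Proof. unfold prepend; rewrite nth_overflow by lia; f_equal; lia. Qed.

Lemma orbit_prepend_head w e y r :
  (r <= length w)%nat -> orbit (prepend w e) y r = Tword y (firstn r w).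
Proof.
  intros Hr; apply (orbit_word _ _ _ O r); auto.
  intros j Hj; apply nth_indep; auto.
Qed.

Lemma orbit_prepend_tail w e y n :
  orbit (prepend w e) y (length w + n) = orbit e (Tword y w) n.
Proof.
  induction n as [|n IH].
  - rewrite Nat.add_0_r, orbit_prepend_head, firstn_all; auto.
  - rewrite Nat.add_succ_r; simpl; rewrite IH, prepend_tail; reflexivity.
Qed.

Lemma Sigma_prepend x w e C : 1 < b -> 0 <= x <= C ->
  path_in (fun z => 0 <= z <= C) x w -> (forall i, (e i <= m)%nat) ->
  (forall n, 0 <= orbit e (Tword x w) n <= C) -> Sigma b m x (prepend w e).
Proof.
  intros Hb Hx Hw He Horbit; split.
  - intros i; unfold prepend; destruct (Nat.lt_ge_cases i (length w)).
    + rewrite nth_indep with (d' := O) by auto; eapply path_in_digit; eauto.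
    + rewrite nth_overflow by auto; auto.
  - apply (is_series_of_bounded_orbit _ _ C Hb); intros n.
    destruct (Nat.le_gt_cases n (length w)) as [Hn|Hn].
    + rewrite orbit_prepend_head by auto; apply path_in_firstn; auto.
    + replace n with (length w + (n - length w))%nat by lia.
      rewrite orbit_prepend_tail; auto.
Qed.

End Expansions.

(** * Embedding Cantor space by choosing blocks *)

Lemma distinct_lists_nth (u v : list nat) :
  length u = length v -> u <> v ->
  exists r, (r < length u)%nat /\ nth r u O <> nth r v O.
Proof.
  intros Hlen Hne; apply NNPP; intros Hall; apply Hne, (nth_ext u v O O Hlen).
  intros r Hr; apply NNPP; intros Hr'; apply Hall; eauto.
Qed.

Section Tree.
Variables (b : R) (m N : nat) (K : R -> Prop) (W : R -> bool -> list nat).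
Hypothesis W_length : forall y t, K y -> length (W y t) = N.
Hypothesis W_path : forall y t, K y -> path_in b m K y (W y t).
Hypothesis W_distinct : forall y, K y -> W y false <> W y true.
Variable y0 : R.
Hypothesis y0_in : K y0.

Fixpoint state (s : nat -> bool) (k : nat) : R :=
  match k with O => y0 | S k => Tword b (state s k) (W (state s k) (s k)) end.

Definition block (s : nat -> bool) (k : nat) : list nat := W (state s k) (s k).

Definition code (s : nat -> bool) (i : nat) : nat := nth (i mod N) (block s (i / N)) O.

Lemma N_pos : (0 < N)%nat.
Proof.
  destruct N as [|n] eqn:HN; [|lia]; exfalso; apply (W_distinct y0 y0_in).
  pose proof (W_length y0 false y0_in); pose proof (W_length y0 true y0_in).
  destruct (W y0 false), (W y0 true); simpl in *; congruence.
Qed.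

Lemma state_in s k : K (state s k).
Proof. induction k; simpl; auto; apply path_in_last with m; auto. Qed.

Lemma block_length s k : length (block s k) = N.
Proof. apply W_length, state_in. Qed.

Lemma code_block s k r : (r < N)%nat -> code s (k * N + r) = nth r (block s k) O.
Proof.
  intros Hr; pose proof N_pos; unfold code.
  rewrite Nat.div_add_l, Nat.div_small, Nat.add_0_r by lia.
  rewrite Nat.add_comm, Nat.Div0.mod_add, Nat.mod_small by lia; reflexivity.
Qed.

Lemma orbit_code_block s k r : (r <= N)%nat ->
  orbit b (code s) y0 (k * N + r) = Tword b (state s k) (firstn r (block s k)).
Proof.
  assert (Hword : forall k r, (r <= N)%nat ->
    orbit b (code s) y0 (k * N + r) = Tword b (orbit b (code s) y0 (k * N)) (firstn r (block s k))).
  { intros k' r' Hr'; apply orbit_word; rewrite ?block_length; auto.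
    intros j Hj; apply code_block; auto. }
  revert r; induction k as [|k IH]; intros r Hr; rewrite Hword by auto; f_equal.
  replace (S k * N)%nat with (k * N + N)%nat by lia.
  rewrite IH, firstn_all2 by (rewrite ?block_length; lia); reflexivity.
Qed.

Lemma orbit_code_in s n : K (orbit b (code s) y0 n).
Proof.
  pose proof N_pos.
  rewrite (Nat.div_mod_eq n N), Nat.mul_comm, orbit_code_block
    by (pose proof (Nat.mod_upper_bound n N); lia).
  apply path_in_firstn with m; [apply state_in|apply W_path, state_in|].
  rewrite block_length; pose proof (Nat.mod_upper_bound n N); lia.
Qed.

Lemma code_digit s i : (code s i <= m)%nat.
Proof. unfold code, block; eapply path_in_digit, W_path, state_in. Qed.

Lemma state_agree s t k : (forall i, (i < k)%nat -> s i = t i) ->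
  forall j, (j <= k)%nat -> state s j = state t j.
Proof.
  intros Hagree; induction j as [|j IH]; intros Hj; simpl; auto.
  rewrite IH, Hagree by lia; reflexivity.
Qed.

Lemma code_separates s t k :
  (forall i, (i < k)%nat -> s i = t i) -> s k <> t k ->
  exists j, (j < S k * N)%nat /\ code s j <> code t j.
Proof.
  intros Hagree Hk.
  assert (Hblocks : block s k <> block t k).
  { unfold block; rewrite (state_agree s t k Hagree k (le_n k)).
    pose proof (W_distinct _ (state_in t k)).
    destruct (s k), (t k); congruence. }
  destruct (distinct_lists_nth _ _ (eq_trans (block_length s k) (eq_sym (block_length t k))) Hblocks)
    as [r [Hr Hne]].
  rewrite block_length in Hr.
  exists (k * N + r)%nat; split; [lia|]; rewrite !code_block; auto.
Qed.

End Tree.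

(** * The digit maps for beta < G(m) *)

Lemma nat_floor_le (v : R) (m : nat) : 0 <= v <= INR m -> (1 <= m)%nat ->
  exists a : nat, (a + 1 <= m)%nat /\ INR a <= v <= INR a + 1.
Proof.
  intros Hv Hm; destruct (INR_unbounded v) as [n Hn].
  destruct (least_witness (fun n => v < INR n) n ltac:(lra)) as [j [_ [Hj Hleast]]].
  destruct j as [|a]; [simpl in Hj; lra|]; rewrite S_INR in Hj.
  assert (Ha : INR a <= v) by (apply Rnot_lt_le; intros Hlt; apply (Hleast a); auto).
  destruct (le_lt_dec (a + 1) m) as [Ham|Ham]; [exists a; split; auto; lra|].
  exists (m - 1)%nat; split; [lia|].
  assert (a = m) as -> by (apply Nat.le_antisymm; [apply INR_le; lra | lia]).
  rewrite minus_INR by lia; simpl; lra.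
Qed.

Lemma pow_mul_unbounded (b a C : R) : 1 < b -> 0 < a -> exists n, C <= b ^ n * a.
Proof.
  intros Hb Ha; destruct (Pow_x_infinity b ltac:(rewrite Rabs_pos_eq; lra) (C / a)) as [n Hn].
  exists n; specialize (Hn n (Nat.le_refl n)).
  rewrite Rabs_pos_eq in Hn by (apply pow_le; lra); apply Rge_le in Hn.
  apply (Rmult_le_compat_r a) in Hn; [|lra].
  unfold Rdiv in Hn; rewrite Rmult_assoc, Rinv_l in Hn; lra.
Qed.

Section Dynamics.
Variables (m : nat) (b eps : R).

Definition xmax : R := INR m / (b - 1).
Definition rho : R := 1 - xmax / 2 + eps.
Definition in_J (y : R) : Prop := 0 <= y <= xmax.
Definition in_K (y : R) : Prop := eps <= y <= xmax - eps.

Hypothesis m_pos : (1 <= m)%nat.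
Hypothesis b_gt_1 : 1 < b.
Hypothesis eps_pos : 0 < eps.
Hypothesis eps_le : 2 * eps <= xmax - 1.
Hypothesis rho_le : rho <= / (2 * (b + 1)).
Hypothesis odd_or_rho : Nat.Odd m \/ rho <= 0.
Hypothesis eps_b_le : eps * (b + 1) <= xmax.

Definition forks (y : R) : Prop := exists d1 d2, d1 <> d2 /\
  (d1 <= m)%nat /\ (d2 <= m)%nat /\ in_K (b * y - INR d1) /\ in_K (b * y - INR d2).

Lemma b_xmax : b * xmax = xmax + INR m.
Proof. unfold xmax; field; lra. Qed.

Lemma INR_m_ge_1 : 1 <= INR m.
Proof. apply le_INR in m_pos; simpl in m_pos; lra. Qed.

Lemma in_K_in_J y : in_K y -> in_J y.
Proof. unfold in_K, in_J; lra. Qed.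

(* With [a] the integer part of [b y - xmax/2], the digits [a] and [a+1] send
   [y] to either side of [xmax/2]; if one of them leaves [K], the other one
   lands within [rho] of the centre. *)
Lemma fork_or_near_center y : xmax / 2 <= b * y <= xmax / 2 + INR m ->
  forks y \/ exists d, (d <= m)%nat /\ Rabs (b * y - INR d - xmax / 2) < rho.
Proof.
  intros Hy; destruct (nat_floor_le (b * y - xmax / 2) m ltac:(lra) m_pos) as [a [Ha Hv]].
  unfold rho; destruct (Rle_dec (b * y - xmax / 2 - INR a) (xmax / 2 - eps)) as [Hp|Hp];
    destruct (Rle_dec (INR a + 1 - (b * y - xmax / 2)) (xmax / 2 - eps)) as [Hq|Hq].
  - left; exists a, (S a); unfold in_K; repeat split; try lia; rewrite ?S_INR; lra.
  - right; exists a; split; [lia|]; rewrite Rabs_right; lra.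
  - right; exists (S a); split; [lia|]; rewrite S_INR, Rabs_left1; lra.
  - lra.
Qed.

Lemma near_center_in_K y d : Rabs (b * y - INR d - xmax / 2) < rho -> in_K (b * y - INR d).
Proof. intros H; apply Rabs_def2 in H; unfold in_K, rho in *; lra. Qed.

(* Near the centre, [b y - xmax/2] lies within [b rho] of [m/2 = k + 1/2]; as
   [rho (1 + b) <= 1/2], no digit sends [y] within [rho] of the centre, so
   [fork_or_near_center] must yield a fork.  This is where [b < G(m)] and the
   parity of [m] are used. *)
Lemma near_center_forks y : Rabs (y - xmax / 2) < rho -> forks y.
Proof.
  intros Hz; assert (Hrho : 0 < rho) by (pose proof (Rabs_pos (y - xmax / 2)); lra).
  assert (Hbz : Rabs (b * (y - xmax / 2)) < b * rho).
  { rewrite Rabs_mult, Rabs_right by lra; apply Rmult_lt_compat_l; lra. }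
  assert (Hshift : b * y - xmax / 2 = b * (y - xmax / 2) + INR m / 2)
    by (pose proof b_xmax; lra).
  assert (Hsmall : rho * (1 + b) <= / 2).
  { apply Rle_trans with (/ (2 * (b + 1)) * (1 + b));
      [apply Rmult_le_compat_r; lra | right; field; lra]. }
  assert (b * rho < / 2) by nra.
  pose proof INR_m_ge_1; apply Rabs_def2 in Hbz as [Hbz1 Hbz2].
  destruct (fork_or_near_center y) as [|[d [Hd Hnear]]]; [lra|auto|].
  exfalso; destruct odd_or_rho as [[k Hk]|]; [|lra].
  replace (b * y - INR d - xmax / 2) with (b * (y - xmax / 2) + INR m / 2 - INR d) in Hnear by lra.
  rewrite Hk, plus_INR, mult_INR in Hnear; simpl in Hnear.
  apply Rabs_def2 in Hnear as [Hn1 Hn2].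
  destruct (le_lt_dec d k) as [Hdk|Hdk]; apply le_INR in Hdk; rewrite ?S_INR in Hdk; nra.
Qed.

Lemma K_step y : in_K y -> exists d, (d <= m)%nat /\ in_K (b * y - INR d).
Proof.
  intros Hy; pose proof b_xmax; unfold in_K in *.
  destruct (Rlt_le_dec (b * y) (xmax / 2)) as [Hlow|Hlow];
    [exists O; split; [lia|]; simpl; split; nra|].
  destruct (Rlt_le_dec (xmax / 2 + INR m) (b * y)) as [Hhigh|Hhigh];
    [exists m; split; [lia|]; split; nra|].
  destruct (fork_or_near_center y (conj Hlow Hhigh))
    as [[d1 [d2 [_ [Hd1 [_ [HK _]]]]]]|[d [Hd Hnear]]].
  - exists d1; auto.
  - exists d; split; auto; apply near_center_in_K; auto.
Qed.

Lemma K_path_of_length L y : in_K y -> exists w, length w = L /\ path_in b m in_K y w.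
Proof.
  revert y; induction L as [|L IH]; intros y Hy; [exists nil; simpl; auto|].
  destruct (K_step y Hy) as [d [Hd HK]]; destruct (IH _ HK) as [w [Hlen Hw]].
  exists (d :: w); simpl; auto.
Qed.

(* The extreme digits [0] and [m] push points of [K] away from the ends of [J]
   at rate [b], until they reach the region where [b y] is central. *)
Lemma reach_central n y : in_K y ->
  xmax / 2 <= b ^ n * y -> xmax / 2 <= b ^ n * (xmax - y) ->
  exists w, (length w <= n)%nat /\ path_in b m in_K y w /\
    xmax / 2 <= b * Tword b y w <= xmax / 2 + INR m.
Proof.
  pose proof b_xmax; revert y; induction n as [|n IH]; intros y Hy H1 H2.
  - exists nil; simpl in *; unfold in_K in *; split; [lia|split; auto; nra].
  - unfold in_K in Hy; simpl in H1, H2.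
    assert (1 <= b ^ n) by (apply pow_R1_Rle; lra).
    destruct (Rlt_le_dec (b * y) (xmax / 2)) as [Hlow|Hlow].
    + assert (HK : in_K (b * y - INR 0)) by (unfold in_K; simpl; split; nra).
      destruct (IH _ HK) as [w [Hlen [Hw Hc]]]; simpl; try nra.
      exists (O :: w); split; [simpl; lia|split; [split; [lia|auto]|exact Hc]].
    + destruct (Rlt_le_dec (xmax / 2 + INR m) (b * y)) as [Hhigh|Hhigh].
      * assert (HK : in_K (b * y - INR m)) by (unfold in_K; split; nra).
        destruct (IH _ HK) as [w [Hlen [Hw Hc]]]; [nra|nra|].
        exists (m :: w); split; [simpl; lia|split; [split; [lia|auto]|exact Hc]].
      * exists nil; simpl; split; [lia|]; auto.
Qed.

Lemma reach_fork n : xmax / 2 <= b ^ n * eps -> forall y, in_K y ->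
  exists w, (length w <= S n)%nat /\ path_in b m in_K y w /\ forks (Tword b y w).
Proof.
  intros Hn y Hy; assert (0 < b ^ n) by (apply pow_lt; lra).
  destruct (reach_central n y Hy) as [w [Hlen [Hw Hc]]]; try (unfold in_K in Hy; nra).
  destruct (fork_or_near_center _ Hc) as [Hfork|[d [Hd Hnear]]];
    [exists w; split; [lia|]; auto|].
  exists (w ++ d :: nil); rewrite length_app; simpl; split; [lia|split].
  - apply path_in_app; simpl; auto using near_center_in_K.
  - rewrite Tword_app; apply near_center_forks; auto.
Qed.

Lemma branching_words n : xmax / 2 <= b ^ n * eps -> forall y, in_K y ->
  exists u0 u1, length u0 = (n + 2)%nat /\ length u1 = (n + 2)%nat /\
    path_in b m in_K y u0 /\ path_in b m in_K y u1 /\ u0 <> u1.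
Proof.
  intros Hn y Hy; destruct (reach_fork n Hn y Hy) as [w [Hlen [Hw Hfork]]].
  destruct Hfork as [d1 [d2 [Hne [Hd1 [Hd2 [HK1 HK2]]]]]].
  destruct (K_path_of_length (n + 1 - length w) _ HK1) as [v1 [Hv1 Hpath1]].
  destruct (K_path_of_length (n + 1 - length w) _ HK2) as [v2 [Hv2 Hpath2]].
  exists (w ++ d1 :: v1), (w ++ d2 :: v2); rewrite !length_app; simpl.
  repeat split; try lia; try (apply path_in_app; simpl; auto).
  intros Heq; apply app_inv_head in Heq; congruence.
Qed.

Lemma branching_word_choice n : xmax / 2 <= b ^ n * eps ->
  exists W : R -> bool -> list nat,
    (forall y t, in_K y -> length (W y t) = (n + 2)%nat) /\
    (forall y t, in_K y -> path_in b m in_K y (W y t)) /\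
    (forall y, in_K y -> W y false <> W y true).
Proof.
  intros Hn; destruct (choice (fun y Wy => in_K y ->
    (forall t, length (Wy t) = (n + 2)%nat /\ path_in b m in_K y (Wy t)) /\
    Wy false <> Wy true)) as [W HW].
  - intros y; destruct (classic (in_K y)) as [Hy|Hy]; [|exists (fun _ => nil); tauto].
    destruct (branching_words n Hn y Hy) as [u0 [u1 [H0 [H1 [Hp0 [Hp1 Hne]]]]]].
    exists (fun t : bool => if t then u1 else u0); intros _; split; auto.
    intros []; auto.
  - exists W; repeat split; intros; apply HW; auto.
Qed.

Lemma reach_K_from n x : 0 < x < xmax ->
  eps <= b ^ n * x -> eps <= b ^ n * (xmax - x) ->
  exists w, path_in b m in_J x w /\ in_K (Tword b x w).
Proof.
  pose proof b_xmax; revert x; induction n as [|n IH]; intros x Hx H1 H2.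
  - exists nil; simpl in *; unfold in_K; lra.
  - assert (1 <= b ^ n) by (apply pow_R1_Rle; lra); simpl in H1, H2.
    destruct (Rlt_le_dec x eps) as [Hlow|Hlow].
    + assert (Hroom : eps <= xmax - b * x) by nra.
      assert (Hnext : 0 < b * x - INR 0 < xmax /\ eps <= b ^ n * (b * x - INR 0) /\
                      eps <= b ^ n * (xmax - (b * x - INR 0)))
        by (simpl; rewrite Rminus_0_r; repeat split; nra).
      destruct Hnext as [Hn1 [Hn2 Hn3]]; destruct (IH _ Hn1 Hn2 Hn3) as [w [Hw HK]].
      exists (O :: w); split; [|exact HK].
      simpl in *; unfold in_J; repeat split; auto; lia || lra.
    + destruct (Rlt_le_dec (xmax - eps) x) as [Hhigh|Hhigh];
        [|exists nil; simpl; unfold in_K; split; auto; lra].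
      assert (Hroom : eps <= b * x - INR m) by nra.
      assert (Hnext : 0 < b * x - INR m < xmax /\ eps <= b ^ n * (b * x - INR m) /\
                      eps <= b ^ n * (xmax - (b * x - INR m)))
        by (repeat split; nra).
      destruct Hnext as [Hn1 [Hn2 Hn3]]; destruct (IH _ Hn1 Hn2 Hn3) as [w [Hw HK]].
      exists (m :: w); split; [|exact HK].
      simpl in *; unfold in_J; repeat split; auto; lia || lra.
Qed.

Lemma reach_K x : 0 < x < xmax -> exists w, path_in b m in_J x w /\ in_K (Tword b x w).
Proof.
  intros Hx.
  destruct (pow_mul_unbounded b (Rmin x (xmax - x)) eps b_gt_1) as [n Hn];
    [apply Rmin_pos; lra|].
  assert (Hpow : 0 <= b ^ n) by (apply pow_le; lra).
  pose proof (Rmult_le_compat_l (b ^ n) _ _ Hpow (Rmin_l x (xmax - x))).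
  pose proof (Rmult_le_compat_l (b ^ n) _ _ Hpow (Rmin_r x (xmax - x))).
  apply (reach_K_from n); auto; lra.
Qed.

End Dynamics.

(* [b < G(m)] says exactly that [b^2 - (k+1) b - (k+1) < 0] when [m = 2k+1],
   and [b < k+1] when [m = 2k]. *)
Lemma lt_Gm_spec m b : 1 < b < Gm m ->
  (1 <= m)%nat /\ 2 * b + 1 < xmax m b * (b + 1) /\ (Nat.Odd m \/ 2 < xmax m b).
Proof.
  intros [Hb HG]; unfold Gm in HG; cbv zeta in HG.
  assert (HM : xmax m b * (b - 1) = INR m) by (unfold xmax; field; lra).
  destruct (Nat.Even_or_Odd m) as [[k Hk]|[k Hk]].
  - rewrite (proj2 (Nat.even_spec m) (ex_intro _ k Hk)), Hk, Nat.div2_double in HG.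
    assert (HmR : INR m = 2 * INR k) by (rewrite Hk, mult_INR; simpl; ring).
    assert (1 <= k)%nat by (destruct k; [simpl in HG; lra | lia]).
    assert (2 < xmax m b) by (apply le_INR in H; simpl in H; nra).
    split; [lia|]; split; [nra | now right].
  - assert (Hodd : Nat.even m = false)
      by (rewrite <- Nat.negb_odd, (proj2 (Nat.odd_spec m) (ex_intro _ k Hk)); reflexivity).
    replace (Nat.div2 m) with k in HG
      by (rewrite Hk, Nat.add_1_r; symmetry; apply Nat.div2_succ_double).
    rewrite Hodd in HG.
    assert (HmR : INR m = 2 * INR k + 1) by (rewrite Hk, plus_INR, mult_INR; simpl; ring).
    pose proof (pos_INR k).
    set (disc := INR k ^ 2 + 6 * INR k + 5) in HG.
    assert (Hdisc : sqrt disc * sqrt disc = disc) by (apply sqrt_sqrt; unfold disc; nra).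
    pose proof (sqrt_pos disc).
    assert (Hquad : b * b - (INR k + 1) * b - (INR k + 1) < 0).
    { destruct (Rle_dec (2 * b) (INR k + 1)); [nra|].
      assert ((2 * b - (INR k + 1)) * (2 * b - (INR k + 1)) < sqrt disc * sqrt disc)
        by (apply Rmult_le_0_lt_compat; lra).
      unfold disc in *; nra. }
    split; [lia|]; split; [nra | left; now exists k].
Qed.

Lemma good_eps_exists m b : 1 < b ->
  2 * b + 1 < xmax m b * (b + 1) -> (Nat.Odd m \/ 2 < xmax m b) ->
  exists eps, 0 < eps /\ 2 * eps <= xmax m b - 1 /\ rho m b eps <= / (2 * (b + 1)) /\
    (Nat.Odd m \/ rho m b eps <= 0) /\ eps * (b + 1) <= xmax m b.
Proof.
  intros Hb Hcenter Hpar; set (M := xmax m b) in *.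
  assert (1 < M).
  { apply Rnot_le_lt; intros HM1.
    pose proof (Rmult_le_compat_r (b + 1) M 1 ltac:(lra) HM1); lra. }
  assert (Hbound : 0 < / (2 * (b + 1)) - 1 + M / 2).
  { apply (Rmult_lt_reg_r (2 * (b + 1))); [lra|].
    replace ((/ (2 * (b + 1)) - 1 + M / 2) * (2 * (b + 1)))
      with (1 - 2 * (b + 1) + M * (b + 1)) by (field; lra); lra. }
  assert (HM5 : 0 < M / (b + 1)) by (apply Rdiv_lt_0_compat; lra).
  assert (Hparity : exists a, 0 < a /\ (Nat.Odd m \/ a <= M / 2 - 1)).
  { destruct Hpar as [Hodd|H2]; [exists 1 | exists (M / 2 - 1)]; split; auto; lra. }
  destruct Hparity as [a [Ha Hodd]].
  pose proof (Rmin_l (Rmin ((M - 1) / 2) (/ (2 * (b + 1)) - 1 + M / 2)) (Rmin a (M / (b + 1)))).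
  pose proof (Rmin_r (Rmin ((M - 1) / 2) (/ (2 * (b + 1)) - 1 + M / 2)) (Rmin a (M / (b + 1)))).
  pose proof (Rmin_l ((M - 1) / 2) (/ (2 * (b + 1)) - 1 + M / 2)).
  pose proof (Rmin_r ((M - 1) / 2) (/ (2 * (b + 1)) - 1 + M / 2)).
  pose proof (Rmin_l a (M / (b + 1))); pose proof (Rmin_r a (M / (b + 1))).
  exists (Rmin (Rmin ((M - 1) / 2) (/ (2 * (b + 1)) - 1 + M / 2)) (Rmin a (M / (b + 1)))).
  unfold rho; fold M; repeat split; try lra.
  - repeat apply Rmin_pos; lra.
  - destruct Hodd; [left | right]; auto; lra.
  - apply (Rmult_le_reg_r (/ (b + 1))); [apply Rinv_0_lt_compat; lra|].
    rewrite Rmult_assoc, Rinv_r by lra; unfold Rdiv in *; lra.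
Qed.

Theorem theorem5p1 (m : nat) (beta : R) :
  1 < beta < Gm m ->
  exists c : R, 0 < c /\
    forall x : R, 0 < x < INR m / (beta - 1) ->
      Rbar_le (Finite c) (hdim m (Sigma beta m x)).
Proof.
  intros Hbeta; pose proof (proj1 Hbeta) as Hb.
  destruct (lt_Gm_spec m beta Hbeta) as [Hm [Hcenter Hpar]].
  destruct (good_eps_exists m beta Hb Hcenter Hpar)
    as [eps [Heps [Heps1 [Hrho [Hodd Heps2]]]]].
  destruct (pow_mul_unbounded beta eps (xmax m beta / 2) Hb Heps) as [n Hreach].
  destruct (branching_word_choice m beta eps Hm Hb Heps Heps1 Hrho Hodd n Hreach)
    as [W [W_length [W_path W_distinct]]].
  exists (dim_bound m (n + 2)); split; [apply dim_bound_pos; lia|].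
  intros x Hx; destruct (reach_K m beta eps Hm Hb Heps Heps2 x Hx) as [w [Hw Hy0]].
  apply (hdim_ge_dim_bound m (n + 2) (length w) _
           (fun s => prepend w (code beta (n + 2) W (Tword beta x w) s)) Hm ltac:(lia)).
  - intros s; apply (Sigma_prepend _ _ _ _ _ (xmax m beta) Hb); [unfold xmax; lra | exact Hw | |].
    + intros i; eapply code_digit; eauto.
    + intros k; apply (in_K_in_J m beta eps Heps), (orbit_code_in beta m (n + 2) _ W); auto.
  - intros s t k Hagree Hk.
    destruct (code_separates beta m (n + 2) _ W W_length W_path W_distinct _ Hy0 s t k Hagree Hk)
      as [j [Hj Hne]].
    exists (length w + j)%nat; rewrite !prepend_tail; split; [lia | auto].
Qed.
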